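(* Let ${}_{\mathfrak Y}\mathfrak B_{\mathfrak X}$ be a left-fibrant graph of bisets. If for all $y\in\mathfrak Y$ the maps $()^-\colon G_y\to G_{y^-}$ are injective, then for every vertex $z\in\mathfrak B$ the natural map \[B_z\to\pi_1(\mathfrak B,\lambda(z),\rho(z)),\qquad b\mapsto 1\otimes b\otimes 1,\] is injective.
   Context: Graphs and graphs of groups. A graph is a set $V\sqcup E$ with $x\mapsto x^-\in V$, $x\mapsto\bar x$, $\bar{\bar x}=x$, $x=x^-\iff x=\bar x\iff x\in V$; $x^+=(\bar x)^-$. Graph morphisms commute with these (may send edges to vertices); simplicial ones send edges to edges. A graph of groups is a connected graph with groups $G_x$ and homomorphisms $g\mapsto g^-\colon G_x\to G_{x^-}$, $g\mapsto\bar g\colon G_x\to G_{\bar x}$ ($G_x\to G_{\bar x}\to G_x$ identity, both identity for vertices); fundamental groupoid $\pi_1(\mathfrak X)$: objects $V$, generated by the $x\in\mathfrak X$ (from $x^-$ to $x^+$) and elements of the $G_v$, relations of the $G_v$, $v=1\in G_v$, $x\bar x=1$, $g^-x=xg^+$ ($g^+=(\bar g)^-$); $\pi_1(\mathfrak X,v,w)$ = morphisms from $v$ to $w$. Graphs of bisets: a graph $\mathfrak B$, graph morphisms $\lambda\colon\mathfrak B\to\mathfrak Y$, $\rho\colon\mathfrak B\to\mathfrak X$, $G_{\lambda(z)}$-$G_{\rho(z)}$-bisets $B_z$ and congruences $b\mapsto b^-\colon B_z\to B_{z^-}$, $b\mapsto\bar b\colon B_z\to B_{\bar z}$ w.r.t.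 the group homomorphisms (same axioms), $b^+=(\bar b)^-$. Fundamental biset $\pi_1(\mathfrak B,\dagger,* )$ for vertices $\dagger,*$: $\bigsqcup_{z\in V(\mathfrak B)}\pi_1(\mathfrak Y,\dagger,\lambda(z))\otimes_{G_{\lambda(z)}}B_z\otimes_{G_{\rho(z)}}\pi_1(\mathfrak X,\rho(z),* )$ modulo $q\otimes b^-\otimes p=q\lambda(z)\otimes b^+\otimes\overline{\rho(z)}p$ for edges $z$ ($\lambda(z),\overline{\rho(z)}$ groupoid morphisms, trivial if vertices). Left-fibrant: $\rho$ simplicial and for every vertex $v\in\mathfrak B$ and edge $f\in\mathfrak X$ with $f^-=\rho(v)$, the map $\bigsqcup_{e\in\rho^{-1}(f),\,e^-=v}G_{\lambda(v)}\otimes_{G_{\lambda(e)}}B_e\to B_v$, $g\otimes b\mapsto gb^-$, is an isomorphism of $G_{\lambda(v)}$-$G_f$-bisets. *)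

From Stdlib Require Import List Relations.
Import ListNotations.



Record group := Group {
  gcarrier :> Type;
  gmul : gcarrier -> gcarrier -> gcarrier;
  gone : gcarrier;
  ginv : gcarrier -> gcarrier;
  gmulA : forall x y z, gmul x (gmul y z) = gmul (gmul x y) z;
  gmul1l : forall x, gmul gone x = x;
  gmulVl : forall x, gmul (ginv x) x = gone
}.
Arguments gmul {g} x y.
Arguments gone {g}.
Arguments ginv {g} x.

Definition is_hom {G H : group} (f : G -> H) : Prop :=
  forall x y, f (gmul x y) = gmul (f x) (f y).

(* Graphs: a set with x |-> x^- (src) and x |-> xbar (bar), such that
   xbarbar = x, x^- is a vertex, and x = x^- <-> x = xbar <-> x vertex.  *)
Record graph := Graph {
  gcar :> Type;
  src : gcar -> gcar;
  bar : gcar -> gcar;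
  barK : forall x, bar (bar x) = x;
  src_idem : forall x, src (src x) = src x;
  src_bar : forall x, src x = x <-> bar x = x
}.
Arguments src {g} x.
Arguments bar {g} x.
Arguments barK {g} x.

Definition vertex {X : graph} (x : X) : Prop := src x = x.
Definition tgt {X : graph} (x : X) : X := src (bar x).

Fixpoint epath {X : graph} (a : X) (s : list X) (b : X) : Prop :=
  match s with
  | [] => a = b
  | x :: s' => a = src x /\ epath (tgt x) s' b
  end.
Definition connected (X : graph) : Prop :=
  forall v w : X, vertex v -> vertex w -> exists s, epath v s w.

Record gmorph (Y X : graph) := GMorph {
  gmap :> Y -> X;
  gmap_src : forall x, gmap (src x) = src (gmap x);
  gmap_bar : forall x, gmap (bar x) = bar (gmap x)
}.
Arguments gmap {Y X} g x.
Arguments gmap_src {Y X} g x.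
Arguments gmap_bar {Y X} g x.

Definition simplicial {Y X : graph} (f : gmorph Y X) : Prop :=
  forall x, ~ vertex x -> ~ vertex (f x).

Record graph_of_groups := GoG {
  ggraph :> graph;
  ggraph_conn : connected ggraph;
  ggrp : ggraph -> group;
  gdown : forall x, ggrp x -> ggrp (src x);
  gbar : forall x, ggrp x -> ggrp (bar x);
  gdown_hom : forall x, is_hom (gdown x);
  gbar_hom : forall x, is_hom (gbar x);
  gbarK : forall x g, eq_rect _ ggrp (gbar _ (gbar _ g)) x (barK x) = g;
  gdown_vertex : forall x (h : src x = x) g,
      gdown x g = eq_rect x ggrp g (src x) (eq_sym h);
  gbar_vertex : forall x (h : bar x = x) g,
      gbar x g = eq_rect x ggrp g (bar x) (eq_sym h)
}.
Arguments ggrp {g0} x.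
Arguments gdown {g0} x _.
Arguments gbar {g0} x _.

Definition gup {X : graph_of_groups} {x : X} (g : ggrp x) : ggrp (tgt x) :=
  gdown _ (gbar _ g).

(* Fundamental groupoid: words in the letters x (from x^- to x^+) and
   g in G_v (v a vertex), modulo the congruence generated by the relations. *)
Inductive letter (X : graph_of_groups) :=
  | LE : ggraph X -> letter X
  | LG : forall v : ggraph X, ggrp v -> letter X.
Arguments LE {X}.
Arguments LG {X}.

Definition word (X : graph_of_groups) := list (letter X).

Fixpoint wpath {X : graph_of_groups} (a : X) (w : word X) (b : X) : Prop :=
  match w with
  | [] => a = b
  | LE x :: w' => a = src x /\ wpath (tgt x) w' b
  | LG v _ :: w' => a = v /\ vertex v /\ wpath v w' b
  end.

Inductive grel {X : graph_of_groups} : X -> X -> word X -> word X -> Prop :=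
  | grel_mul : forall v (g h : ggrp v), vertex v ->
      grel v v [LG v g; LG v h] [LG v (gmul g h)]
  | grel_one : forall v, vertex v -> grel v v [LG v (@gone (ggrp v))] []
  | grel_vertex : forall v, vertex v -> grel v v [LE v] [LG v (@gone (ggrp v))]
  | grel_barinv : forall x, grel (src x) (src x) [LE x; LE (bar x)] []
  | grel_edge : forall x (g : ggrp x),
      grel (src x) (tgt x) [LG (src x) (gdown _ g); LE x] [LE x; LG (tgt x) (gup g)].

Inductive gstep {X : graph_of_groups} (a b : X) : word X -> word X -> Prop :=
  | gstep_ctx : forall u v c d r1 r2, wpath a u c -> grel c d r1 r2 -> wpath d v b ->
      gstep a b (u ++ r1 ++ v) (u ++ r2 ++ v).

(* equality in pi_1(X, a, b) of two words from a to b *)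
Definition gequiv {X : graph_of_groups} (a b : X) : relation (word X) :=
  clos_refl_sym_trans _ (gstep a b).

Record graph_of_bisets (Y X : graph_of_groups) := GoB {
  bgraph :> graph;
  blam : gmorph bgraph Y;
  brho : gmorph bgraph X;
  bset : bgraph -> Type;
  bact_l : forall z, ggrp (blam z) -> bset z -> bset z;
  bact_r : forall z, bset z -> ggrp (brho z) -> bset z;
  bact_l_one : forall z b, bact_l z gone b = b;
  bact_l_mul : forall z g h b, bact_l z (gmul g h) b = bact_l z g (bact_l z h b);
  bact_r_one : forall z b, bact_r z b gone = b;
  bact_r_mul : forall z g h b, bact_r z b (gmul g h) = bact_r z (bact_r z b g) h;
  bact_lr : forall z g b h, bact_r z (bact_l z g b) h = bact_l z g (bact_r z b h);
  bdown : forall z, bset z -> bset (src z);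
  bbar : forall z, bset z -> bset (bar z);
  bdown_l : forall z g b, bdown z (bact_l z g b) =
      bact_l (src z) (eq_rect _ (@ggrp Y) (gdown _ g) _ (eq_sym (gmap_src blam z)))
             (bdown z b);
  bdown_r : forall z b g, bdown z (bact_r z b g) =
      bact_r (src z) (bdown z b)
             (eq_rect _ (@ggrp X) (gdown _ g) _ (eq_sym (gmap_src brho z)));
  bbar_l : forall z g b, bbar z (bact_l z g b) =
      bact_l (bar z) (eq_rect _ (@ggrp Y) (gbar _ g) _ (eq_sym (gmap_bar blam z)))
             (bbar z b);
  bbar_r : forall z b g, bbar z (bact_r z b g) =
      bact_r (bar z) (bbar z b)
             (eq_rect _ (@ggrp X) (gbar _ g) _ (eq_sym (gmap_bar brho z)));
  bbarK : forall z b, eq_rect _ bset (bbar _ (bbar z b)) z (barK z) = b;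
  bdown_vertex : forall z (h : src z = z) b,
      bdown z b = eq_rect z bset b (src z) (eq_sym h);
  bbar_vertex : forall z (h : bar z = z) b,
      bbar z b = eq_rect z bset b (bar z) (eq_sym h)
}.
Arguments bgraph {Y X} _.
Arguments blam {Y X}.
Arguments brho {Y X}.
Arguments bset {Y X}.
Arguments bact_l {Y X g0 z}.
Arguments bact_r {Y X g0 z}.
Arguments bdown {Y X g0 z}.
Arguments bbar {Y X g0 z}.

Definition bup {Y X : graph_of_groups} {B : graph_of_bisets Y X} {z : B}
  (b : bset B z) : bset B (tgt z) := bdown (bbar b).

(* Fundamental biset pi_1(B, dag, star): triples q (x) b (x) p with
   z a vertex of B, q in pi_1(Y, dag, lam z), b in B_z, p in pi_1(X, rho z, star). *)
Record belt {Y X : graph_of_groups} (B : graph_of_bisets Y X) := BElt {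
  bz : bgraph B;
  bq : word Y;
  bb : bset B bz;
  bp : word X
}.
Arguments BElt {Y X B}.
Arguments bz {Y X B} _.
Arguments bq {Y X B} _.
Arguments bb {Y X B} _.
Arguments bp {Y X B} _.

Definition belt_wf {Y X : graph_of_groups} (B : graph_of_bisets Y X)
  (dag : Y) (star : X) (e : belt B) : Prop :=
  vertex (bz e) /\ wpath dag (bq e) (blam B (bz e)) /\ wpath (brho B (bz e)) (bp e) star.

Inductive bstep0 {Y X : graph_of_groups} (B : graph_of_bisets Y X) (dag : Y) (star : X)
  : belt B -> belt B -> Prop :=
  | bstep_q : forall z q q' b p, gequiv dag (blam B z) q q' ->
      bstep0 B dag star (BElt z q b p) (BElt z q' b p)
  | bstep_p : forall z q b p p', gequiv (brho B z) star p p' ->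
      bstep0 B dag star (BElt z q b p) (BElt z q b p')
  | bstep_tl : forall z q (g : ggrp (blam B z)) b p,
      bstep0 B dag star (BElt z (q ++ [LG (blam B z) g]) b p) (BElt z q (bact_l g b) p)
  | bstep_tr : forall z q b (g : ggrp (brho B z)) p,
      bstep0 B dag star (BElt z q (bact_r b g) p) (BElt z q b (LG (brho B z) g :: p))
  | bstep_edge : forall z q (b : bset B z) p, ~ vertex z ->
      bstep0 B dag star (BElt (src z) q (bdown b) p)
                      (BElt (tgt z) (q ++ [LE (blam B z)]) (bup b)
                            (LE (bar (brho B z)) :: p)).

Definition bstep {Y X : graph_of_groups} (B : graph_of_bisets Y X) (dag : Y) (star : X)
  (e e' : belt B) : Prop :=
  belt_wf B dag star e /\ belt_wf B dag star e' /\ bstep0 B dag star e e'.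

(* equality in pi_1(B, dag, star) *)
Definition bequiv {Y X : graph_of_groups} (B : graph_of_bisets Y X) (dag : Y) (star : X)
  : relation (belt B) := clos_refl_sym_trans _ (bstep B dag star).

(* For a vertex v of B and an edge f of X with f^- = rho v,
   the biset  |_|_{e in rho^-1(f), e^- = v} G_{lam v} (x)_{G_{lam e}} B_e
   has elements (e, g, b) modulo (e, g h^-, b) ~ (e, g, h b).            *)
Record telt {Y X : graph_of_groups} (B : graph_of_bisets Y X) (v : B) (f : X) := TElt {
  te : bgraph B;
  te_rho : brho B te = f;
  te_src : src te = v;
  tg : ggrp (blam B v);
  tb : bset B te
}.
Arguments TElt {Y X B v f}.
Arguments te {Y X B v f} _.
Arguments te_src {Y X B v f} _.
Arguments tg {Y X B v f} _.
Arguments tb {Y X B v f} _.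

Definition tdown {Y X : graph_of_groups} {B : graph_of_bisets Y X} {v : B}
  {e : B} (hs : src e = v) (h : ggrp (blam B e)) : ggrp (blam B v) :=
  eq_rect _ (@ggrp Y) (eq_rect _ (@ggrp Y) (gdown _ h) _ (eq_sym (gmap_src (blam B) e)))
          _ (f_equal (blam B) hs).

Inductive tstep {Y X : graph_of_groups} (B : graph_of_bisets Y X) (v : B) (f : X)
  : telt B v f -> telt B v f -> Prop :=
  | tstep_def : forall e he hs g h b,
      tstep B v f (TElt e he hs (gmul g (tdown hs h)) b) (TElt e he hs g (bact_l h b)).

Definition tequiv {Y X : graph_of_groups} (B : graph_of_bisets Y X) (v : B) (f : X)
  : relation (telt B v f) := clos_refl_sym_trans _ (tstep B v f).

Definition tmap {Y X : graph_of_groups} {B : graph_of_bisets Y X} {v : B} {f : X}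
  (t : telt B v f) : bset B v :=
  bact_l (tg t) (eq_rect _ (bset B) (bdown (tb t)) _ (te_src t)).

(* The map is always a well-defined morphism of G_{lam v}-G_f-bisets;
   being an isomorphism amounts to bijectivity of the induced map on the
   quotient: surjectivity, and injectivity modulo tequiv. *)
Definition left_fibrant {Y X : graph_of_groups} (B : graph_of_bisets Y X) : Prop :=
  simplicial (brho B) /\
  forall (v : B) (f : X), vertex v -> ~ vertex f -> src f = brho B v ->
    (forall b : bset B v, exists t : telt B v f, tmap t = b) /\
    (forall t t' : telt B v f, tmap t = tmap t' -> tequiv B v f t t').

(* Since the maps G_y -> G_(y^-) are injective, every element of pi_1(Y, dag, v) has a
   unique reduced form t_1 y_1 ... t_n y_n g with each t_i taken from a fixed transversal of
   the image of G_(y_i) in G_(y_i^-) (Serre's normal form), and letters of Y act on reduced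
   forms.  An element q (x) b (x) p of pi_1(B, dag, star) is normalised by reducing q, moving
   its trailing group element into b, and letting p act on the right: group letters act on b,
   and an edge f of X is crossed by decomposing b = g b_e^- with rho(e) = f (left fibrancy),
   appending g lam(e) to the reduced form and continuing with b_e^+.  Left fibrancy makes
   this independent of the decomposition, and all defining relations of the fundamental
   groupoids and of the fundamental biset preserve the normal form.  The normal form of
   1 (x) b (x) 1 is (empty form, z, b), so b is determined by its class. *)

From Stdlib Require Import List Classical ClassicalEpsilon ProofIrrelevance
  FunctionalExtensionality PropExtensionality Eqdep.
Import ListNotations.

Local Notation decide := excluded_middle_informative.

Lemma cast_irr {A} (P : A -> Type) (u v : A) (H1 H2 : u = v) (x : P u) :
  eq_rect u P x v H1 = eq_rect u P x v H2.
Proof. rewrite (proof_irrelevance _ H1 H2); reflexivity. Qed.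

Lemma cast_id {A} (P : A -> Type) (u : A) (H : u = u) (x : P u) : eq_rect u P x u H = x.
Proof. rewrite (proof_irrelevance _ H eq_refl); reflexivity. Qed.

Section GroupTheory.
Variable G : group.

Lemma gmulVr (x : G) : gmul x (ginv x) = gone.
Proof.
  transitivity (gmul (gmul (ginv (ginv x)) (ginv x)) (gmul x (ginv x))).
  - rewrite gmulVl, gmul1l; reflexivity.
  - rewrite <- gmulA, (gmulA G (ginv x)), gmulVl, gmul1l. apply gmulVl.
Qed.

Lemma gmul1r (x : G) : gmul x gone = x.
Proof. rewrite <- (gmulVl G x), gmulA, gmulVr, gmul1l; reflexivity. Qed.

Lemma gmulI (x y z : G) : gmul x y = gmul x z -> y = z.
Proof.
  intro H. rewrite <- (gmul1l G y), <- (gmul1l G z), <- (gmulVl G x), <- !gmulA, H.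
  reflexivity.
Qed.

End GroupTheory.

Lemma hom_one (G H : group) (f : G -> H) : is_hom f -> f gone = gone.
Proof. intro hf. apply (gmulI _ (f gone)). rewrite <- hf, gmul1l, gmul1r; reflexivity. Qed.

Lemma hom_inv (G H : group) (f : G -> H) : is_hom f -> forall x, f (ginv x) = ginv (f x).
Proof. intros hf x. apply (gmulI _ (f x)). rewrite <- hf, !gmulVr. apply hom_one, hf. Qed.

Section CosetTransversal.
Context {H G : group} (i : H -> G).
Hypothesis i_hom : is_hom i.

Definition in_image (g : G) : Prop := exists k, g = i k.
Definition represents (g t : G) : Prop :=
  (exists k, g = gmul t (i k)) /\ (in_image g -> t = gone).

Definition coset_rep (g : G) : G := epsilon (inhabits g) (represents g).

Lemma in_image_mul g k : in_image (gmul g (i k)) <-> in_image g.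
Proof.
  split; intros [m Hm].
  - exists (gmul m (ginv k)). rewrite i_hom, (hom_inv _ _ _ i_hom), <- Hm, <- gmulA, gmulVr.
    symmetry; apply gmul1r.
  - exists (gmul m k). rewrite i_hom, Hm. reflexivity.
Qed.

Lemma represents_mul g k : represents (gmul g (i k)) = represents g.
Proof.
  apply functional_extensionality; intro t. apply propositional_extensionality.
  unfold represents. rewrite in_image_mul. split; intros [[m Hm] Ht]; split; auto.
  - exists (gmul m (ginv k)). rewrite i_hom, (hom_inv _ _ _ i_hom), gmulA, <- Hm,
      <- gmulA, gmulVr. symmetry; apply gmul1r.
  - exists (gmul m k). rewrite i_hom, gmulA, Hm. reflexivity.
Qed.

Lemma coset_rep_spec g : represents g (coset_rep g).
Proof.
  unfold coset_rep; apply epsilon_spec. destruct (classic (in_image g)) as [[k Hk]|Hg].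
  - exists gone. split; [exists k; rewrite gmul1l; exact Hk | reflexivity].
  - exists g. split; [|contradiction]. exists gone. rewrite (hom_one _ _ _ i_hom), gmul1r.
    reflexivity.
Qed.

Lemma coset_rep_mul g k : coset_rep (gmul g (i k)) = coset_rep g.
Proof.
  unfold coset_rep. rewrite represents_mul.
  rewrite (proof_irrelevance _ (inhabits (gmul g (i k))) (inhabits g)). reflexivity.
Qed.

Definition coset_coord (g : G) : H :=
  proj1_sig (constructive_indefinite_description _ (proj1 (coset_rep_spec g))).

Lemma coset_decomp g : g = gmul (coset_rep g) (i (coset_coord g)).
Proof. exact (proj2_sig (constructive_indefinite_description _ (proj1 (coset_rep_spec g)))). Qed.

Lemma coset_rep_idem g : coset_rep (coset_rep g) = coset_rep g.
Proof.
  assert (Hr : coset_rep g = gmul g (i (ginv (coset_coord g)))).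
  { rewrite (coset_decomp g) at 2.
    rewrite <- gmulA, <- i_hom, gmulVr, (hom_one _ _ _ i_hom), gmul1r. reflexivity. }
  rewrite Hr at 1. apply coset_rep_mul.
Qed.

Lemma coset_rep_one : coset_rep gone = gone.
Proof. apply (proj2 (coset_rep_spec gone)). exists gone. symmetry; apply hom_one, i_hom. Qed.

Hypothesis i_inj : forall k k', i k = i k' -> k = k'.

Lemma coset_decomp_unique g t k : g = gmul t (i k) -> coset_rep t = t ->
  coset_rep g = t /\ coset_coord g = k.
Proof.
  intros Hg Ht. assert (E : coset_rep g = t) by (rewrite Hg, coset_rep_mul; exact Ht).
  split; [exact E|]. apply i_inj, (gmulI _ t).
  rewrite <- Hg, <- E. symmetry. apply coset_decomp.
Qed.

End CosetTransversal.

Lemma gmap_tgt (A C : graph) (F : gmorph A C) (x : A) : F (tgt x) = tgt (F x).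
Proof. unfold tgt. rewrite gmap_src, gmap_bar; reflexivity. Qed.

Lemma vertex_src (A : graph) (x : A) : vertex (src x).
Proof. apply src_idem. Qed.

Lemma vertex_tgt (A : graph) (x : A) : vertex (tgt x).
Proof. apply src_idem. Qed.

Lemma vertex_barE (A : graph) (x : A) : vertex x -> bar x = x.
Proof. apply src_bar. Qed.

Lemma vertex_tgtE (A : graph) (x : A) : vertex x -> tgt x = src x.
Proof. intro H. unfold tgt. rewrite vertex_barE; auto. Qed.

Lemma vertex_bar (A : graph) (x : A) : vertex x -> vertex (bar x).
Proof. intro H. unfold vertex. rewrite vertex_barE; auto. Qed.

Lemma nonvertex_bar (A : graph) (x : A) : ~ vertex x -> ~ vertex (bar x).
Proof. intros H1 H2. apply H1. rewrite <- (barK x). apply vertex_bar, H2. Qed.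

Section GraphOfGroupsTheory.
Variable G : graph_of_groups.
Local Notation P := (fun x : ggraph G => gcarrier (@ggrp G x)).

Lemma cast_mul (u v : G) (H : u = v) (a b : ggrp u) :
  eq_rect u P (gmul a b) v H = gmul (eq_rect u P a v H) (eq_rect u P b v H).
Proof. destruct H; reflexivity. Qed.

Lemma cast_one (u v : G) (H : u = v) : eq_rect u P gone v H = gone.
Proof. destruct H; reflexivity. Qed.

Lemma cast_gdown (a b c : G) (H : a = b) (E : src a = c) (E' : src b = c) (k : ggrp a) :
  eq_rect _ P (gdown a k) _ E = eq_rect _ P (gdown b (eq_rect _ P k _ H)) _ E'.
Proof. destruct H; rewrite (proof_irrelevance _ E E'); reflexivity. Qed.

Lemma gup_mul (x : G) (h k : ggrp x) : gup (gmul h k) = gmul (gup h) (gup k).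
Proof. unfold gup. rewrite gbar_hom, gdown_hom; reflexivity. Qed.

Lemma gup_vertex (x : G) (k : ggrp x) (E : tgt x = src x) :
  vertex x -> eq_rect _ P (gup k) _ E = gdown x k.
Proof.
  intro vx. unfold gup.
  rewrite (gdown_vertex _ x vx), (gdown_vertex _ (bar x) (vertex_bar _ x vx)),
    (gbar_vertex _ x (vertex_barE _ x vx)), !rew_compose.
  apply (cast_irr P).
Qed.

Lemma gup_bar (x : G) (k : ggrp x) (E : tgt (bar x) = src x) :
  eq_rect _ P (gup (gbar x k)) _ E = gdown x k.
Proof.
  unfold gup. rewrite (cast_gdown _ _ _ (barK x) _ eq_refl). simpl. rewrite gbarK. reflexivity.
Qed.

End GraphOfGroupsTheory.

Section ReducedWords.
Context {Y : graph_of_groups}.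
Hypothesis gdown_inj : forall (y : ggraph Y) (g h : ggrp y), gdown y g = gdown y h -> g = h.
Local Notation P := (fun x : ggraph Y => gcarrier (@ggrp Y x)).
Local Notation rep x := (coset_rep (gdown x)).
Local Notation coord x := (coset_coord (gdown x) (gdown_hom _ x)).

Record syllable := Syllable { syl_edge : ggraph Y; syl_rep : ggrp (src syl_edge) }.

(* [RWord [Syllable x_n t_n; ...; Syllable x_1 t_1] v g] stands for the element
   t_1 x_1 ... t_n x_n g of pi_1(Y), ending at v. *)
Record rword := RWord { rw_syls : list syllable; rw_end : ggraph Y; rw_elt : ggrp rw_end }.

Definition cancels_top (L : list syllable) (x : Y) (t : ggrp (src x)) : Prop :=
  match L with Syllable y _ :: _ => t = gone /\ y = bar x | [] => False end.

Fixpoint reduced (L : list syllable) : Prop :=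
  match L with
  | [] => True
  | Syllable x t :: L' => rep x t = t /\ reduced L' /\ ~ cancels_top L' x t
  end.

Definition rw_push (L : list syllable) (x : Y) (t : ggrp (src x)) (h : ggrp x) : rword :=
  match L with
  | Syllable y ty :: L' =>
      match decide (t = gone /\ y = bar x) with
      | left Hc =>
          RWord L' (src y) (gmul ty (eq_rect _ P (gup h) _ (f_equal src (eq_sym (proj2 Hc)))))
      | right _ => RWord (Syllable x t :: L) (tgt x) (gup h)
      end
  | [] => RWord [Syllable x t] (tgt x) (gup h)
  end.

(* Letters that do not start at the end vertex act trivially (junk). *)
Definition rw_act (s : rword) (l : letter Y) : rword :=
  match l with
  | LG v g =>
      match decide (v = rw_end s) with
      | left H => RWord (rw_syls s) (rw_end s) (gmul (rw_elt s) (eq_rect _ P g _ H))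
      | right _ => s
      end
  | LE x =>
      match decide (vertex x), decide (src x = rw_end s) with
      | right _, left H =>
          let g := eq_rect _ P (rw_elt s) _ (eq_sym H) in
          rw_push (rw_syls s) x (rep x g) (coord x g)
      | _, _ => s
      end
  end.

Definition rw_acts (s : rword) (w : word Y) : rword := fold_left rw_act w s.

Lemma RWord_cast L v1 v2 (H : v1 = v2) g1 g2 :
  eq_rect _ P g1 _ H = g2 -> RWord L v1 g1 = RWord L v2 g2.
Proof. destruct H; simpl; intros ->; reflexivity. Qed.

Lemma rw_push_cancel L' y ty x t h (Hc : t = gone /\ y = bar x) :
  rw_push (Syllable y ty :: L') x t h =
  RWord L' (src y) (gmul ty (eq_rect _ P (gup h) _ (f_equal src (eq_sym (proj2 Hc))))).
Proof.
  simpl. destruct (decide (t = gone /\ y = bar x)) as [Hc'|]; [|contradiction].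
  do 2 f_equal. apply cast_irr.
Qed.

Lemma rw_push_extend L x t h :
  ~ cancels_top L x t -> rw_push L x t h = RWord (Syllable x t :: L) (tgt x) (gup h).
Proof.
  intro HL. destruct L as [|[y ty] L']; [reflexivity|]. simpl.
  destruct (decide (t = gone /\ y = bar x)); [contradiction|reflexivity].
Qed.

Lemma rw_act_LG L u g v k (H : v = u) :
  rw_act (RWord L u g) (LG v k) = RWord L u (gmul g (eq_rect _ P k _ H)).
Proof.
  simpl. destruct (decide (v = u)) as [H'|]; [|contradiction].
  rewrite (cast_irr _ _ _ H' H); reflexivity.
Qed.

Lemma rw_act_LE L x g : ~ vertex x ->
  rw_act (RWord L (src x) g) (LE x) = rw_push L x (rep x g) (coord x g).
Proof.
  intro nx. simpl. destruct (decide (vertex x)); [contradiction|].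
  destruct (decide (src x = src x)) as [H|]; [|contradiction].
  rewrite (cast_id _ _ (eq_sym H)); reflexivity.
Qed.

Lemma rw_act_vertex s x : vertex x -> rw_act s (LE x) = s.
Proof. intro vx. simpl. destruct (decide (vertex x)); [reflexivity|contradiction]. Qed.

Lemma rw_act_LE_reduced s x : rw_end s = src x -> reduced (rw_syls s) ->
  rw_end (rw_act s (LE x)) = tgt x /\ reduced (rw_syls (rw_act s (LE x))).
Proof.
  intros Hv Hok. destruct (classic (vertex x)) as [vx|nx].
  { rewrite rw_act_vertex, vertex_tgtE by exact vx. auto. }
  destruct s as [L u g]; simpl in Hv, Hok; subst u. rewrite rw_act_LE by exact nx.
  destruct (classic (cancels_top L x (rep x g))) as [Hc|Hc].
  - destruct L as [|[y ty] L']; [contradiction|].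
    rewrite (rw_push_cancel L' y ty x _ _ Hc). simpl.
    split; [rewrite (proj2 Hc); reflexivity | apply Hok].
  - rewrite rw_push_extend by exact Hc. simpl. split; [reflexivity|].
    split; [apply coset_rep_idem, gdown_hom|]. auto.
Qed.

Lemma rw_acts_wpath w s a b : wpath a w b -> rw_end s = a -> reduced (rw_syls s) ->
  rw_end (rw_acts s w) = b /\ reduced (rw_syls (rw_acts s w)).
Proof.
  revert s a. induction w as [|[x|v k] w IH]; intros s a Hw Hv Hok; simpl in Hw.
  - subst; auto.
  - destruct Hw as [Ha Hw]. subst a.
    destruct (rw_act_LE_reduced s x Hv Hok) as [H1 H2]. exact (IH _ _ Hw H1 H2).
  - destruct Hw as [Ha [_ Hw]]. subst a. destruct s as [L u g]; simpl in Hv, Hok; subst u.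
    apply (IH _ v Hw); rewrite (rw_act_LG L v g v k eq_refl); auto.
Qed.

Lemma rw_push_LG L x t h k :
  rw_act (rw_push L x t h) (LG (tgt x) (gup k)) = rw_push L x t (gmul h k).
Proof.
  destruct L as [|[y ty] L'].
  - simpl rw_push. rewrite (rw_act_LG _ _ _ _ _ eq_refl), gup_mul. reflexivity.
  - unfold rw_push. destruct (decide (t = gone /\ y = bar x)) as [Hc|n].
    + rewrite (rw_act_LG _ _ _ _ _ (f_equal src (eq_sym (proj2 Hc)))).
      rewrite gup_mul, cast_mul, gmulA. reflexivity.
    + rewrite (rw_act_LG _ _ _ _ _ eq_refl), gup_mul. reflexivity.
Qed.

Lemma rw_act_edge s x k : rw_end s = src x ->
  rw_act (rw_act s (LG (src x) (gdown x k))) (LE x) =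
  rw_act (rw_act s (LE x)) (LG (tgt x) (gup k)).
Proof.
  intro Hv. destruct s as [L u g]; simpl in Hv; subst u.
  rewrite (rw_act_LG L (src x) g (src x) (gdown x k) eq_refl). simpl eq_rect.
  destruct (classic (vertex x)) as [vx|nx].
  - rewrite !rw_act_vertex by exact vx.
    rewrite (rw_act_LG L (src x) g (tgt x) (gup k) (vertex_tgtE _ x vx)), gup_vertex by exact vx.
    reflexivity.
  - rewrite !rw_act_LE by exact nx.
    destruct (coset_decomp_unique _ (gdown_hom _ x) (gdown_inj x) (gmul g (gdown x k)) (rep x g)
                (gmul (coord x g) k)) as [E1 E2].
    { rewrite gdown_hom, gmulA, <- coset_decomp. reflexivity. }
    { apply coset_rep_idem, gdown_hom. }
    rewrite E1, E2, rw_push_LG. reflexivity.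
Qed.

Lemma rw_act_barinv s x : rw_end s = src x -> reduced (rw_syls s) ->
  rw_act (rw_act s (LE x)) (LE (bar x)) = s.
Proof.
  intros Hv Hok. destruct (classic (vertex x)) as [vx|nx].
  { rewrite !rw_act_vertex; auto using vertex_bar. }
  assert (nbx := nonvertex_bar _ x nx).
  destruct s as [L u g]; simpl in Hv, Hok; subst u. rewrite rw_act_LE by exact nx.
  assert (Hdec := coset_decomp _ (gdown_hom _ x) g).
  destruct (classic (cancels_top L x (rep x g))) as [Hc|Hc].
  - destruct L as [|[y ty] L']; [contradiction|]. destruct Hc as [Hr Hy]. subst y.
    destruct Hok as [Hty [_ Hadj]].
    rewrite (rw_push_cancel L' (bar x) ty x _ _ (conj Hr eq_refl)), cast_id,
      rw_act_LE by exact nbx.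
    destruct (coset_decomp_unique _ (gdown_hom _ (bar x)) (gdown_inj (bar x))
                (gmul ty (gup (coord x g))) ty (gbar x (coord x g)) eq_refl Hty) as [E1 E2].
    rewrite E1, E2, rw_push_extend by exact Hadj.
    apply (RWord_cast _ _ _ (f_equal src (barK x))). etransitivity; [apply gup_bar|].
    rewrite Hr, gmul1l in Hdec. symmetry; exact Hdec.
  - rewrite rw_push_extend by exact Hc.
    change (tgt x) with (src (bar x)). rewrite rw_act_LE by exact nbx.
    destruct (coset_decomp_unique _ (gdown_hom _ (bar x)) (gdown_inj (bar x))
                (gup (coord x g)) gone (gbar x (coord x g))) as [E1 E2].
    { rewrite gmul1l; reflexivity. }
    { apply coset_rep_one, gdown_hom. }
    rewrite E1, E2, (rw_push_cancel L x (rep x g) (bar x) _ _ (conj eq_refl (eq_sym (barK x)))).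
    f_equal. etransitivity; [|symmetry; exact Hdec]. f_equal. apply gup_bar.
Qed.

Lemma rw_acts_grel s c d r1 r2 : grel c d r1 r2 -> rw_end s = c -> reduced (rw_syls s) ->
  rw_acts s r1 = rw_acts s r2.
Proof.
  intros Hr Hv Hok. destruct Hr as [v g h vv|v vv|v vv|x|x g]; cbn [rw_acts fold_left].
  - destruct s as [L u g0]; simpl in Hv; subst u.
    rewrite !(rw_act_LG _ _ _ _ _ eq_refl). simpl. rewrite gmulA. reflexivity.
  - destruct s as [L u g0]; simpl in Hv; subst u.
    rewrite !(rw_act_LG _ _ _ _ _ eq_refl). simpl. rewrite gmul1r. reflexivity.
  - rewrite rw_act_vertex by exact vv.
    destruct s as [L u g0]; simpl in Hv; subst u.
    rewrite !(rw_act_LG _ _ _ _ _ eq_refl). simpl. rewrite gmul1r. reflexivity.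
  - apply rw_act_barinv; auto.
  - apply rw_act_edge; auto.
Qed.

Lemma rw_acts_gequiv a b w w' s : gequiv a b w w' -> rw_end s = a -> reduced (rw_syls s) ->
  rw_acts s w = rw_acts s w'.
Proof.
  intros Hq Hv Hok. induction Hq as [w w' [u v c d r1 r2 Hu Hr _]| | |]; try congruence.
  unfold rw_acts. rewrite !fold_left_app.
  destruct (rw_acts_wpath u s a c Hu Hv Hok) as [H1 H2].
  pose proof (rw_acts_grel _ c d r1 r2 Hr H1 H2) as E. unfold rw_acts in E. rewrite E.
  reflexivity.
Qed.

End ReducedWords.

Arguments syllable : clear implicits.
Arguments rword : clear implicits.

Section BisetNormalForms.
Variables (Y X : graph_of_groups) (B : graph_of_bisets Y X).
Hypothesis gdown_inj : forall (y : ggraph Y) (g h : ggrp y), gdown y g = gdown y h -> g = h.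
Hypothesis fibrant : left_fibrant B.
Local Notation PY := (fun x : ggraph Y => gcarrier (@ggrp Y x)).
Local Notation PX := (fun x : ggraph X => gcarrier (@ggrp X x)).
Local Notation PB := (fun x : bgraph B => bset B x).

(* [BState L v b] stands for [q (x) b] with [q] the element [RWord L (blam B v) 1]. *)
Record bstate :=
  BState { bs_syls : list (syllable Y); bs_vertex : bgraph B; bs_elt : bset B bs_vertex }.

Definition bs_tensor (w : rword Y) (v : B) (b : bset B v) : bstate :=
  match decide (rw_end w = blam B v) with
  | left H => BState (rw_syls w) v (bact_l (eq_rect _ PY (rw_elt w) _ H) b)
  | right _ => BState (rw_syls w) v b
  end.

(* For [t = (e, g, b_e)] with [rho e = f]:  q (x) g b_e^- (x) f = q g lam(e) (x) b_e^+. *)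
Definition bs_cross (L : list (syllable Y)) (v : B) (f : X) (t : telt B v f) : bstate :=
  bs_tensor (rw_act (RWord L (blam B v) (tg t)) (LE (blam B (te t)))) (tgt (te t)) (bup (tb t)).

(* The decomposition is an arbitrary choice; by left fibrancy the result does not depend
   on it, see [bs_act_cross]. *)
Definition bs_act (s : bstate) (l : letter X) : bstate :=
  match l with
  | LG u g =>
      match decide (u = brho B (bs_vertex s)) with
      | left H => BState (bs_syls s) (bs_vertex s) (bact_r (bs_elt s) (eq_rect _ PX g _ H))
      | right _ => s
      end
  | LE f =>
      match decide (vertex f), decide (exists t : telt B (bs_vertex s) f, tmap t = bs_elt s) with
      | right _, left Hex =>
          let t := proj1_sig (constructive_indefinite_description _ Hex) in
          bs_cross (bs_syls s) (bs_vertex s) f t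
      | _, _ => s
      end
  end.

Definition bs_acts (s : bstate) (w : word X) : bstate := fold_left bs_act w s.

Definition bs_ok (s : bstate) : Prop := vertex (bs_vertex s) /\ reduced (bs_syls s).

Lemma BState_cast L v1 v2 (H : v1 = v2) b1 b2 :
  eq_rect _ PB b1 _ H = b2 -> BState L v1 b1 = BState L v2 b2.
Proof. destruct H; simpl; intros ->; reflexivity. Qed.

Lemma RWord_eta_cast (w : rword Y) z (H : rw_end w = z) :
  RWord (rw_syls w) z (eq_rect _ PY (rw_elt w) _ H) = w.
Proof. destruct w; simpl in *; destruct H; reflexivity. Qed.

Lemma bs_tensorE w v b (H : rw_end w = blam B v) :
  bs_tensor w v b = BState (rw_syls w) v (bact_l (eq_rect _ PY (rw_elt w) _ H) b).
Proof.
  unfold bs_tensor. destruct (decide (rw_end w = blam B v)) as [H'|]; [|contradiction].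
  rewrite (cast_irr PY _ _ H' H); reflexivity.
Qed.

Lemma bs_tensor_syls w v b : bs_syls (bs_tensor w v b) = rw_syls w.
Proof. unfold bs_tensor; destruct decide; reflexivity. Qed.

Lemma bs_tensor_vertex w v b : bs_vertex (bs_tensor w v b) = v.
Proof. unfold bs_tensor; destruct decide; reflexivity. Qed.

Lemma bs_tensor_ok w v b : vertex v -> reduced (rw_syls w) -> bs_ok (bs_tensor w v b).
Proof. unfold bs_ok. rewrite bs_tensor_vertex, bs_tensor_syls. auto. Qed.

Lemma bs_tensor_LG w v b u k (Hw : rw_end w = blam B v) (Hu : u = blam B v) :
  bs_tensor (rw_act w (LG u k)) v b = bs_tensor w v (bact_l (eq_rect _ PY k _ Hu) b).
Proof.
  destruct w as [L z g]; simpl in Hw; subst z.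
  rewrite (rw_act_LG _ _ _ _ _ Hu). unfold bs_tensor; simpl rw_end.
  destruct (decide (blam B v = blam B v)); [|contradiction]. simpl.
  rewrite !(cast_id PY), bact_l_mul. reflexivity.
Qed.

Lemma bs_act_LG L v b u k (H : u = brho B v) :
  bs_act (BState L v b) (LG u k) = BState L v (bact_r b (eq_rect _ PX k _ H)).
Proof.
  cbn [bs_act bs_vertex bs_syls bs_elt].
  destruct (decide (u = brho B v)) as [H'|]; [|contradiction].
  rewrite (cast_irr PX _ _ H' H); reflexivity.
Qed.

Lemma bs_act_vertex s f : vertex f -> bs_act s (LE f) = s.
Proof. intro vf. cbn [bs_act]. destruct (decide (vertex f)); [reflexivity|contradiction]. Qed.

Lemma bs_tensor_act_LG w v b u k (H : u = brho B v) :
  bs_act (bs_tensor w v b) (LG u k) = bs_tensor w v (bact_r b (eq_rect _ PX k _ H)).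
Proof.
  unfold bs_tensor. destruct decide; rewrite (bs_act_LG _ _ _ _ _ H); [rewrite bact_lr|];
    reflexivity.
Qed.

Lemma cast_bact_l (u v : B) (H : u = v) g b :
  eq_rect u PB (bact_l g b) v H =
  bact_l (eq_rect _ PY g _ (f_equal (blam B) H)) (eq_rect u PB b v H).
Proof. destruct H; reflexivity. Qed.

Lemma cast_bdown (a b c : B) (H : a = b) (E : src a = c) (E' : src b = c) (x : bset B a) :
  eq_rect _ PB (bdown x) _ E = eq_rect _ PB (bdown (eq_rect _ PB x _ H)) _ E'.
Proof. destruct H; rewrite (proof_irrelevance _ E E'); reflexivity. Qed.

Lemma bup_l (e : B) h b (E : tgt (blam B e) = blam B (tgt e)) :
  bup (bact_l h b) = bact_l (eq_rect _ PY (gup h) _ E) (bup b).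
Proof.
  unfold bup. rewrite bbar_l, bdown_l. f_equal. unfold gup. symmetry.
  apply (cast_gdown Y _ _ _ (eq_sym (gmap_bar (blam B) e))).
Qed.

Lemma bup_r (e : B) b k (E : tgt (brho B e) = brho B (tgt e)) :
  bup (bact_r b k) = bact_r (bup b) (eq_rect _ PX (gup k) _ E).
Proof.
  unfold bup. rewrite bbar_r, bdown_r. f_equal. unfold gup. symmetry.
  apply (cast_gdown X _ _ _ (eq_sym (gmap_bar (brho B) e))).
Qed.

Lemma bup_bar (e : B) (b : bset B e) (E : tgt (bar e) = src e) :
  eq_rect _ PB (bup (bbar b)) _ E = bdown b.
Proof.
  unfold bup. rewrite (cast_bdown _ _ _ (barK e) _ eq_refl). simpl. rewrite bbarK. reflexivity.
Qed.

(* The relation g h^- (x) b = g (x) h b is the relation [grel_edge] of pi_1(Y). *)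
Lemma bs_cross_tstep L v f (t t' : telt B v f) : reduced L -> tstep B v f t t' ->
  bs_cross L v f t = bs_cross L v f t'.
Proof.
  intros HL. destruct 1 as [e he hs g h b]. unfold bs_cross; cbn [te tg tb]. destruct hs.
  unfold tdown. cbn [f_equal eq_rect].
  rewrite <- (rw_act_LG L (blam B (src e)) g (src (blam B e)) (gdown _ h)).
  rewrite (rw_act_edge gdown_inj) by apply gmap_src.
  destruct (rw_act_LE_reduced (RWord L (blam B (src e)) g) (blam B e)) as [Hw _];
    [apply gmap_src | exact HL |].
  rewrite (bs_tensor_LG _ _ _ _ _ (eq_trans Hw (eq_sym (gmap_tgt _ _ _ _)))
             (eq_sym (gmap_tgt _ _ _ _))).
  rewrite (bup_l e h b (eq_sym (gmap_tgt _ _ _ _))). reflexivity.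
Qed.

Lemma bs_cross_tequiv L v f (t t' : telt B v f) : reduced L -> tequiv B v f t t' ->
  bs_cross L v f t = bs_cross L v f t'.
Proof.
  intros HL Ht. induction Ht as [t t' Hs| | |]; try congruence. apply bs_cross_tstep; auto.
Qed.

Lemma fibrant_decomp v f (b : bset B v) : vertex v -> ~ vertex f -> src f = brho B v ->
  exists t : telt B v f, tmap t = b.
Proof. intros Hv Hf Hs. apply (proj2 fibrant v f Hv Hf Hs). Qed.

Lemma bs_act_cross L v b f (t : telt B v f) : vertex v -> ~ vertex f -> src f = brho B v ->
  reduced L -> tmap t = b -> bs_act (BState L v b) (LE f) = bs_cross L v f t.
Proof.
  intros Hv Hf Hs HL Ht. cbn [bs_act bs_vertex bs_syls bs_elt].
  destruct (decide (vertex f)); [contradiction|].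
  destruct (decide (exists t : telt B v f, tmap t = b)) as [Hex|Hnex];
    [|exfalso; apply Hnex; exists t; exact Ht].
  destruct (constructive_indefinite_description _ Hex) as [t0 Ht0]. simpl.
  apply bs_cross_tequiv; [exact HL|]. apply (proj2 fibrant v f Hv Hf Hs). congruence.
Qed.

Lemma bs_act_LE_ok s f : bs_ok s -> brho B (bs_vertex s) = src f ->
  bs_ok (bs_act s (LE f)) /\ brho B (bs_vertex (bs_act s (LE f))) = tgt f.
Proof.
  intros [Hv HL] Hs. destruct (classic (vertex f)) as [vf|nf].
  { rewrite bs_act_vertex, vertex_tgtE by exact vf. split; [split|]; auto. }
  destruct s as [L v b]; simpl in Hv, HL, Hs.
  destruct (fibrant_decomp v f b Hv nf (eq_sym Hs)) as [t Ht].
  rewrite (bs_act_cross L v b f t Hv nf (eq_sym Hs) HL Ht).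
  destruct t as [e he hs g be]. unfold bs_cross; cbn [te tg tb].
  destruct (rw_act_LE_reduced (RWord L (blam B v) g) (blam B e)) as [_ Hok];
    [simpl; rewrite <- hs; apply gmap_src | exact HL |].
  split; [apply bs_tensor_ok; [apply vertex_tgt | exact Hok]|].
  rewrite bs_tensor_vertex, gmap_tgt, he. reflexivity.
Qed.

Lemma bs_act_barinv s f : bs_ok s -> ~ vertex f -> src f = brho B (bs_vertex s) ->
  bs_act (bs_act s (LE f)) (LE (bar f)) = s.
Proof.
  intros [Hv HL] nf Hs. destruct s as [L v b]; simpl in Hv, HL, Hs.
  destruct (fibrant_decomp v f b Hv nf Hs) as [t Ht].
  rewrite (bs_act_cross L v b f t Hv nf Hs HL Ht).
  destruct t as [e he hs g be]. subst b. destruct he, hs.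
  unfold bs_cross; cbn [te tg tb].
  set (w := rw_act (RWord L (blam B (src e)) g) (LE (blam B e))).
  destruct (rw_act_LE_reduced (RWord L (blam B (src e)) g) (blam B e)) as [Hw Hok];
    [apply gmap_src | exact HL |].
  fold w in Hw, Hok. rewrite <- gmap_tgt in Hw.
  rewrite (bs_tensorE w _ _ Hw).
  set (t' := TElt (bar e) (gmap_bar (brho B) e) eq_refl (eq_rect _ PY (rw_elt w) _ Hw) (bbar be)
             : telt B (tgt e) (bar (brho B e))).
  assert (Ht' : tmap t' = bact_l (eq_rect _ PY (rw_elt w) _ Hw) (bup be)) by reflexivity.
  rewrite (bs_act_cross _ _ _ _ t' (vertex_tgt _ e) (nonvertex_bar _ _ nf)
             (eq_sym (gmap_tgt _ _ (brho B) e)) Hok Ht').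
  unfold bs_cross; subst t'; cbn [te tg tb].
  rewrite RWord_eta_cast, (gmap_bar (blam B) e). subst w.
  rewrite (rw_act_barinv gdown_inj) by (simpl; first [apply gmap_src | exact HL]).
  rewrite (bs_tensorE (RWord L _ g) (tgt (bar e)) _
             (eq_sym (f_equal (blam B) (f_equal src (barK e))))).
  apply (BState_cast _ _ _ (f_equal src (barK e))). unfold tmap; simpl.
  rewrite cast_bact_l. f_equal.
  - rewrite rew_compose. apply (cast_id PY).
  - apply bup_bar.
Qed.

Lemma bs_act_edge s f k : bs_ok s -> src f = brho B (bs_vertex s) ->
  bs_act (bs_act s (LG (src f) (gdown f k))) (LE f) =
  bs_act (bs_act s (LE f)) (LG (tgt f) (gup k)).
Proof.
  intros [Hv HL] Hs. destruct s as [L v b]; simpl in Hv, HL, Hs.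
  destruct (classic (vertex f)) as [vf|nf].
  - rewrite !bs_act_vertex by exact vf.
    rewrite (bs_act_LG L v b (src f) _ Hs),
      (bs_act_LG L v b (tgt f) _ (eq_trans (vertex_tgtE _ f vf) Hs)).
    do 2 f_equal. rewrite <- (gup_vertex X f k (vertex_tgtE _ f vf) vf), rew_compose.
    apply (cast_irr PX).
  - destruct (fibrant_decomp v f b Hv nf Hs) as [t Ht].
    rewrite (bs_act_cross L v b f t Hv nf Hs HL Ht).
    destruct t as [e he hs g be]. subst b. destruct he, hs.
    rewrite (bs_act_LG L (src e) _ (src (brho B e)) _ Hs).
    assert (Ht' : tmap (TElt e eq_refl eq_refl g (bact_r be k) : telt B (src e) (brho B e)) =
                  bact_r (tmap (TElt e eq_refl eq_refl g be : telt B (src e) (brho B e)))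
                    (eq_rect _ PX (gdown _ k) _ Hs)).
    { unfold tmap; simpl. rewrite bdown_r, <- bact_lr. f_equal. apply (cast_irr PX). }
    rewrite (bs_act_cross _ _ _ _ _ Hv nf Hs HL Ht'). unfold bs_cross; cbn [te tg tb].
    rewrite (bs_tensor_act_LG _ _ _ _ _ (eq_sym (gmap_tgt _ _ (brho B) e))),
      (bup_r e be k (eq_sym (gmap_tgt _ _ (brho B) e))).
    reflexivity.
Qed.

Lemma bs_acts_grel s c d r1 r2 : grel c d r1 r2 -> bs_ok s -> brho B (bs_vertex s) = c ->
  bs_acts s r1 = bs_acts s r2.
Proof.
  intros Hr Hok Hv. destruct Hr as [v g h vv|v vv|v vv|x|x g]; cbn [bs_acts fold_left].
  - destruct s as [L u b]; simpl in Hv.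
    rewrite !(bs_act_LG _ _ _ _ _ (eq_sym Hv)), (cast_mul X), bact_r_mul. reflexivity.
  - destruct s as [L u b]; simpl in Hv.
    rewrite !(bs_act_LG _ _ _ _ _ (eq_sym Hv)), (cast_one X), bact_r_one. reflexivity.
  - rewrite bs_act_vertex by exact vv. destruct s as [L u b]; simpl in Hv.
    rewrite !(bs_act_LG _ _ _ _ _ (eq_sym Hv)), (cast_one X), bact_r_one. reflexivity.
  - destruct (classic (vertex x)) as [vx|nx].
    + rewrite !bs_act_vertex; auto using vertex_bar.
    + apply bs_act_barinv; auto.
  - apply bs_act_edge; auto.
Qed.

Lemma bs_acts_wpath w s a c : wpath a w c -> bs_ok s -> brho B (bs_vertex s) = a ->
  bs_ok (bs_acts s w) /\ brho B (bs_vertex (bs_acts s w)) = c.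
Proof.
  revert s a. induction w as [|[f|v k] w IH]; intros s a Hw Hok Hv; simpl in Hw.
  - subst; auto.
  - destruct Hw as [Ha Hw]. subst a.
    destruct (bs_act_LE_ok s f Hok Hv) as [H1 H2]. exact (IH _ _ Hw H1 H2).
  - destruct Hw as [Ha [_ Hw]]. subst a. destruct s as [L u b]; simpl in Hv.
    apply (IH _ v Hw); rewrite (bs_act_LG _ _ _ _ _ (eq_sym Hv)); auto.
Qed.

Lemma bs_acts_gequiv a b w w' s : gequiv a b w w' -> bs_ok s -> brho B (bs_vertex s) = a ->
  bs_acts s w = bs_acts s w'.
Proof.
  intros Hq Hok Hv. induction Hq as [w w' [u v c d r1 r2 Hu Hr _]| | |]; try congruence.
  unfold bs_acts. rewrite !fold_left_app.
  destruct (bs_acts_wpath u s a c Hu Hok Hv) as [H1 H2].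
  pose proof (bs_acts_grel _ c d r1 r2 Hr H1 H2) as E. unfold bs_acts in E. rewrite E.
  reflexivity.
Qed.

Lemma bs_tensor_cross w z (b : bset B z) : ~ vertex z -> rw_end w = blam B (src z) ->
  reduced (rw_syls w) ->
  bs_act (bs_tensor w (src z) (bdown b)) (LE (brho B z)) =
  bs_tensor (rw_act w (LE (blam B z))) (tgt z) (bup b).
Proof.
  intros nz Hw Hok. destruct fibrant as [Hsimp _].
  set (t := TElt z eq_refl eq_refl (eq_rect _ PY (rw_elt w) _ Hw) b
            : telt B (src z) (brho B z)).
  assert (Ht : tmap t = bact_l (eq_rect _ PY (rw_elt w) _ Hw) (bdown b)) by reflexivity.
  rewrite (bs_tensorE w _ _ Hw),
    (bs_act_cross _ _ _ _ t (vertex_src _ z) (Hsimp z nz) (eq_sym (gmap_src _ z)) Hok Ht).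
  unfold bs_cross; subst t; cbn [te tg tb]. rewrite RWord_eta_cast. reflexivity.
Qed.

Definition belt_state (dag : Y) (e : belt B) : bstate :=
  bs_acts (bs_tensor (rw_acts (RWord [] dag gone) (bq e)) (bz e) (bb e)) (bp e).

Lemma belt_state_bstep dag star e e' : bstep B dag star e e' ->
  belt_state dag e = belt_state dag e'.
Proof.
  intros [[Hz [Hq1 _]] [[_ [Hq2 _]] st]].
  destruct st as [z q q' b p Hq|z q b p p' Hp|z q g b p|z q b g p|z q b p nz];
    unfold belt_state in *; cbn [bq bz bb bp] in *.
  - rewrite (rw_acts_gequiv gdown_inj dag _ q q' (RWord [] dag gone) Hq eq_refl I). reflexivity.
  - destruct (rw_acts_wpath q (RWord [] dag gone) dag _ Hq1 eq_refl I) as [_ Hok].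
    apply (bs_acts_gequiv _ _ _ _ _ Hp).
    + apply bs_tensor_ok; [exact Hz | exact Hok].
    + rewrite bs_tensor_vertex. reflexivity.
  - destruct (rw_acts_wpath q (RWord [] dag gone) dag _ Hq2 eq_refl I) as [Hw _].
    unfold rw_acts at 1. rewrite fold_left_app. cbn [fold_left].
    rewrite (bs_tensor_LG _ _ _ _ _ Hw eq_refl). reflexivity.
  - cbn [bs_acts fold_left]. rewrite (bs_tensor_act_LG _ _ _ _ _ eq_refl). reflexivity.
  - destruct (rw_acts_wpath q (RWord [] dag gone) dag _ Hq1 eq_refl I) as [Hw Hok].
    unfold rw_acts at 2. rewrite fold_left_app. cbn [fold_left bs_acts].
    fold (rw_acts (RWord [] dag gone) q). rewrite <- bs_tensor_cross by assumption.
    unfold bs_acts. f_equal. symmetry. apply bs_act_barinv.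
    + apply bs_tensor_ok; [apply vertex_src | exact Hok].
    + apply (proj1 fibrant), nz.
    + rewrite bs_tensor_vertex. symmetry; apply gmap_src.
Qed.

Lemma belt_state_bequiv dag star e e' : bequiv B dag star e e' ->
  belt_state dag e = belt_state dag e'.
Proof.
  induction 1 as [e e' Hs| | |]; try congruence. apply (belt_state_bstep _ star); exact Hs.
Qed.

Lemma belt_state_unit z (b : bset B z) :
  belt_state (blam B z) (BElt z [] b []) = BState [] z b.
Proof.
  unfold belt_state; cbn. rewrite (bs_tensorE (RWord [] (blam B z) gone) z b eq_refl), bact_l_one.
  reflexivity.
Qed.

End BisetNormalForms.

Theorem mainTheorem18 :
  forall (Y X : graph_of_groups) (B : graph_of_bisets Y X),
    left_fibrant B ->
    (forall (y : ggraph Y) (g h : ggrp y), gdown y g = gdown y h -> g = h) ->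
    forall (z : bgraph B), vertex z ->
    forall b b' : bset B z,
      bequiv B (blam B z) (brho B z) (BElt z [] b []) (BElt z [] b' []) ->
      b = b'.
Proof.
  intros Y X B fibrant gdown_inj z _ b b' Hbb'.
  apply (belt_state_bequiv Y X B gdown_inj fibrant) in Hbb'.
  rewrite !belt_state_unit in Hbb'.
  injection Hbb' as E. apply inj_pair2 in E. exact E.
Qed.
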